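(* Let $X$ be a germ of holomorphic vector field at $(\mathbb{C}^n,0)$ with an isolated singularity at $0$, $\mathcal{F}=\mathcal{F}^X$, and $V\in\mathrm{Sep}_0(\mathcal{F})$. Then $\mathrm{in}(X)|_{C(V,0)}\not\equiv 0$ if and only if $\nu(\mathcal{F},0)=1+r_V(\mathcal{F})$.
   Context: For $X=\sum_i f_i\partial/\partial z_i$ with $\gcd(f_i)=1$, $\nu(\mathcal{F},0)=\min_i\mathrm{ord}_0 f_i$, and $\mathrm{in}(X)$ is the initial part of $X$, i.e. the homogeneous part of degree $\nu(\mathcal{F},0)$ of $X$ (a vector field with homogeneous polynomial coefficients). $C(V,0)$ is the tangent cone of $V$ at $0$. $\mathrm{Sep}_0(\mathcal{F})$ is the set of irreducible germs of complex analytic curves at $0$ invariant by $X$. For $V\in\mathrm{Sep}_0(\mathcal{F})$ with Puiseux parametrization $\alpha$, there is a unique holomorphic $g$ with $X\circ\alpha(t)=g(t)\alpha'(t)$, and $\mathrm{ind}_0(\mathcal{F}|_V)=\mathrm{ord}_0 g$. $m(V,0)$ is the multiplicity of $V$ at $0$, and $r_V(\mathcal{F})=\frac{\mathrm{ind}_0(\mathcal{F}|_V)-1}{m(V,0)}$. *)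

(* complex numbers C = R[i] for R : realType (mathcomp-real-closed),
   germs represented by convergent power series (coefficient functions). *)
From HB Require Import structures.
From mathcomp Require Import all_boot all_order all_algebra.
From mathcomp Require Import reals complex.
From Stdlib Require Import ClassicalEpsilon.
Set Implicit Arguments. Unset Strict Implicit. Unset Printing Implicit Defensive.
Import Order.TTheory GRing.Theory Num.Theory.
Local Open Scope ring_scope.

Section Germs.
Variable R : realType.
Local Notation C := R[i].

Definition ps1 := nat -> C.
Definition mi (n : nat) := {ffun 'I_n -> nat}.
Definition psn (n : nat) := mi n -> C.
Definition mdeg n (b : mi n) : nat := (\sum_(i < n) b i)%N.
Definition mi_of n N (b : {ffun 'I_n -> 'I_N.+1}) : mi n := [ffun i => nat_of_ord (b i)].
Definition mi0 n : mi n := [ffun => 0%N].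
Definition mon n (b : mi n) (z : 'I_n -> C) : C := \prod_(i < n) z i ^+ b i.

Definition conv1 (a : ps1) : Prop :=
  exists r : C, 0 < r /\ exists M : C, forall N,
    \sum_(k < N.+1) `|a k| * r ^+ k <= M.
Definition convn n (f : psn n) : Prop :=
  exists r : C, 0 < r /\ exists M : C, forall N,
    \sum_(b : {ffun 'I_n -> 'I_N.+1}) `|f (mi_of b)| * r ^+ mdeg (mi_of b) <= M.

Definition cvg_to (u : nat -> C) (L : C) : Prop :=
  forall e : C, 0 < e -> exists N, forall k, (N <= k)%N -> `|u k - L| < e.
Definition sum1 (a : ps1) (t : C) (L : C) : Prop :=
  cvg_to (fun N => \sum_(k < N) a k * t ^+ k) L.
Definition sumn n (f : psn n) (z : 'I_n -> C) (L : C) : Prop :=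
  cvg_to (fun N => \sum_(b : {ffun 'I_n -> 'I_N.+1}) f (mi_of b) * mon (mi_of b) z) L.

(* order at 0 of a one-variable series (0 for the zero series) *)
Definition ord1 (a : ps1) : nat :=
  match excluded_middle_informative (exists k, a k != 0) with
  | left P => ex_minn P
  | right _ => 0%N
  end.

Definition deriv1 (a : ps1) : ps1 := fun k => a k.+1 *+ k.+1.
Definition mul1 (a b : ps1) : ps1 := fun k => \sum_(j < k.+1) a j * b (k - j)%N.
(* composition f o alpha for alpha(0) = 0: coefficient of t^k *)
Definition trunc1 (a : ps1) (k : nat) : {poly C} := \poly_(j < k.+1) a j.
Definition pscomp n (f : psn n) (alpha : 'I_n -> ps1) : ps1 := fun k =>
  \sum_(b : {ffun 'I_n -> 'I_k.+1})
     f (mi_of b) * (\prod_(i < n) trunc1 (alpha i) k ^+ b i)`_k.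

Definition holo_vf n (X : 'I_n -> psn n) : Prop := forall i, convn (X i).
Definition isolated_sing n (X : 'I_n -> psn n) : Prop :=
  (forall i, X i (mi0 n) = 0) /\
  exists rho : C, 0 < rho /\ forall z : 'I_n -> C, (forall i, `|z i| < rho) ->
     (forall i, sumn (X i) z 0) -> forall i, z i = 0.

Definition nu0_P n (X : 'I_n -> psn n) (k : nat) : bool :=
  [exists i, [exists b : {ffun 'I_n -> 'I_k.+1},
     (mdeg (mi_of b) == k) && (X i (mi_of b) != 0)]].
Definition nu0 n (X : 'I_n -> psn n) : nat :=
  match excluded_middle_informative (exists k, nu0_P X k) with
  | left P => ex_minn P
  | right _ => 0%N
  end.
Definition initX n (X : 'I_n -> psn n) (i : 'I_n) (w : 'I_n -> C) : C :=
  \sum_(b : {ffun 'I_n -> 'I_(nu0 X).+1} | mdeg (mi_of b) == nu0 X)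
     X i (mi_of b) * mon (mi_of b) w.

(* Puiseux parametrization alpha : (C,0) -> (C^n,0): convergent, alpha(0)=0,
   injective on a small disc (normalization of the irreducible curve germ V) *)
Definition puiseux n (alpha : 'I_n -> ps1) : Prop :=
  (forall i, conv1 (alpha i)) /\ (forall i, alpha i 0%N = 0) /\
  exists eps : C, 0 < eps /\ forall (s t : C) (x y : 'I_n -> C),
    `|s| < eps -> `|t| < eps ->
    (forall i, sum1 (alpha i) s (x i)) -> (forall i, sum1 (alpha i) t (y i)) ->
    (forall i, x i = y i) -> s = t.

Definition multV n (alpha : 'I_n -> ps1) : nat :=
  match excluded_middle_informative (exists k, [exists i, alpha i k != 0]) with
  | left P => ex_minn P
  | right _ => 0%N
  end.

Definition tcone n (alpha : 'I_n -> ps1) (w : 'I_n -> C) : Prop :=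
  exists (t : nat -> C) (lam : nat -> C) (x : nat -> 'I_n -> C),
    cvg_to t 0 /\ (forall k i, sum1 (alpha i) (t k) (x k i)) /\
    forall i, cvg_to (fun k => lam k * x k i) (w i).

(* V = alpha(C,0) is invariant by X: X(alpha(t)) and alpha'(t) are parallel *)
Definition vf_invariant n (X : 'I_n -> psn n) (alpha : 'I_n -> ps1) : Prop :=
  forall i j k, mul1 (pscomp (X i) alpha) (deriv1 (alpha j)) k
              = mul1 (pscomp (X j) alpha) (deriv1 (alpha i)) k.

Definition index_fun n (X : 'I_n -> psn n) (alpha : 'I_n -> ps1) (g : ps1) : Prop :=
  conv1 g /\ forall i k, pscomp (X i) alpha k = mul1 g (deriv1 (alpha i)) k.

(* r_V(F) = (ind_0(F|_V) - 1) / m(V,0) *)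
Definition rV n (alpha : 'I_n -> ps1) (g : ps1) : rat :=
  ((ord1 g)%:R - 1) / (multV alpha)%:R.

End Germs.

(* Let m = m(V,0), nu = nu(F,0) and let v = (alpha_i m)_i be the leading
   coefficients of the parametrization.  Along the curve, X o alpha vanishes
   to order at least m nu and its coefficient of t^(m nu) is in(X)(v).  On the
   other hand X o alpha = g alpha' vanishes to order exactly ord g + m - 1, as
   the coordinate i with alpha_i m <> 0 shows.  Finally C(V,0) is the line
   through v: writing alpha(t) = t^m q(t) with q(t) -> v, every limit w of
   lambda_k alpha(t_k) satisfies w_i v_j = w_j v_i.  Since in(X) is
   homogeneous, it vanishes identically on C(V,0) iff in(X)(v) = 0, and by the
   two order computations in(X)(v) <> 0 iff m nu = ord g + m - 1, that is
   nu = 1 + r_V. *)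

From Pilot Require Import Defs.
From HB Require Import structures.
From mathcomp Require Import all_boot all_order all_algebra.
From mathcomp Require Import reals complex.
From mathcomp Require Import boolp classical_sets topology normedtype sequences.
From mathcomp Require Import ring lra zify.
From Stdlib Require Import ClassicalEpsilon.
Import Order.TTheory GRing.Theory Num.Theory.
Import numFieldTopology.Exports numFieldNormedType.Exports.
Set Implicit Arguments. Unset Strict Implicit. Unset Printing Implicit Defensive.
Local Open Scope ring_scope.
Local Open Scope classical_set_scope.

(* [nu0], [multV] and [Defs.ord1] are all convertible to [least_or0] of their
   defining predicate. *)
Definition least_or0 (P : pred nat) : nat :=
  match excluded_middle_informative (exists k, P k) with
  | left P_ex => ex_minn P_ex
  | right _ => 0%N
  end.

Lemma least_or0_ex (P : pred nat) : (exists k, P k) -> P (least_or0 P).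
Proof.
move=> P_ex; rewrite /least_or0.
by case: excluded_middle_informative => // ?; case: ex_minnP.
Qed.

Lemma least_or0_min (P : pred nat) k : (k < least_or0 P)%N -> ~~ P k.
Proof.
rewrite /least_or0; case: excluded_middle_informative => // P_ex.
by case: ex_minnP => l _ l_min; apply: contraTN => /l_min; rewrite -leqNgt.
Qed.

Lemma least_or0_eq0 (P : pred nat) : ~ (exists k, P k) -> least_or0 P = 0%N.
Proof. by rewrite /least_or0; case: excluded_middle_informative. Qed.

Section FormalSeries.
Variable R : realType.
Local Notation C := R[i].

Lemma mdeg_ge n (b : mi n) i : (b i <= mdeg b)%N.
Proof. by rewrite /mdeg (bigD1 i) //= leq_addr. Qed.

Lemma mdeg_eq0 n (b : mi n) : mdeg b = 0%N -> b = mi0 n.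
Proof.
by move=> b0; apply/ffunP => i; rewrite ffunE; apply/eqP; rewrite -leqn0 -b0 mdeg_ge.
Qed.

Lemma mi_of_box n (b : mi n) N : (forall i, (b i <= N)%N) ->
  exists b' : {ffun 'I_n -> 'I_N.+1}, mi_of b' = b.
Proof.
move=> hb; exists [ffun i => inord (b i)]; apply/ffunP => i.
by rewrite !ffunE inordK // ltnS.
Qed.

Lemma big_box_mdeg n N K (G : mi n -> C) : (N <= K)%N ->
  \sum_(b : {ffun 'I_n -> 'I_K.+1} | mdeg (mi_of b) == N) G (mi_of b) =
  \sum_(b : {ffun 'I_n -> 'I_N.+1} | mdeg (mi_of b) == N) G (mi_of b).
Proof.
move=> NK; have NK' : (N.+1 <= K.+1)%N by [].
pose widen (b : {ffun 'I_n -> 'I_N.+1}) : {ffun 'I_n -> 'I_K.+1} :=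
  [ffun j => widen_ord NK' (b j)].
pose shrink (b : {ffun 'I_n -> 'I_K.+1}) : {ffun 'I_n -> 'I_N.+1} :=
  [ffun j => inord (b j)].
have mi_widen b : mi_of (widen b) = mi_of b by apply/ffunP => j; rewrite !ffunE.
rewrite (reindex_onto widen shrink) => [|b /eqP b_deg].
  apply: eq_big => [b|b _]; last by rewrite mi_widen.
  rewrite mi_widen andb_idr // => _; apply/eqP/ffunP => j.
  by apply: val_inj; rewrite !ffunE /= inordK.
apply/ffunP => j; apply: val_inj; rewrite !ffunE /= inordK // ltnS -b_deg.
by have := mdeg_ge (mi_of b) j; rewrite ffunE.
Qed.

Lemma mul1_low (a b : ps1 R) da db k :
  (forall j, (j < da)%N -> a j = 0) -> (forall j, (j < db)%N -> b j = 0) ->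
  (k < da + db)%N -> mul1 a b k = 0.
Proof.
move=> a_lt b_lt k_lt; apply: big1 => j _.
have [j_lt|j_ge] := ltnP j da; first by rewrite a_lt // mul0r.
by rewrite b_lt ?mulr0 //; have := ltn_ord j; lia.
Qed.

Lemma mul1_lead (a b : ps1 R) da db :
  (forall j, (j < da)%N -> a j = 0) -> (forall j, (j < db)%N -> b j = 0) ->
  mul1 a b (da + db)%N = a da * b db.
Proof.
move=> a_lt b_lt; have da_lt : (da < (da + db).+1)%N by lia.
rewrite /mul1 (bigD1 (Ordinal da_lt)) //= addKn big1 ?addr0 // => j /eqP j_neq.
have [j_lt|j_ge] := ltnP j da; first by rewrite a_lt // mul0r.
have j_gt : (da < j)%N.
  rewrite ltn_neqAle j_ge andbT eq_sym.
  by apply/eqP => j_da; apply: j_neq; apply: val_inj.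
by rewrite b_lt ?mulr0 //; have := ltn_ord j; lia.
Qed.

Lemma poly_vanish_below (p : {poly C}) m :
  (forall i, (i < m)%N -> p`_i = 0) -> p = drop_poly m p * 'X^m.
Proof.
move=> p_lt; have take0 : take_poly m p = 0.
  by apply/polyP => i; rewrite coef_take_poly coef0; case: ltnP => // /p_lt.
by rewrite -[LHS](poly_take_drop m) take0 add0r.
Qed.

Section Composition.
Variables (n : nat) (alpha : 'I_n -> ps1 R) (m : nat).
Hypothesis alpha_lt : forall j l, (l < m)%N -> alpha j l = 0.

Lemma coef_prod_trunc1 (k : nat) (e : 'I_n -> nat) :
  (\prod_(j < n) Defs.trunc1 (alpha j) k ^+ e j)`_k =
  if (k < m * \sum_j e j)%N then 0
  else (\prod_(j < n) drop_poly m (Defs.trunc1 (alpha j) k) ^+ e j)`_(k - m * \sum_j e j).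
Proof.
rewrite (eq_bigr (fun j => drop_poly m (Defs.trunc1 (alpha j) k) ^+ e j * 'X^(m * e j))).
  by rewrite big_split /= prodrXr big_distrr coefMXn.
move=> j _; rewrite exprM -exprMn -poly_vanish_below // => l l_lt.
by rewrite coef_poly; case: ifP => // _; apply: alpha_lt.
Qed.

Lemma coef0_prod_drop (k : nat) (e : 'I_n -> nat) : (m <= k)%N ->
  (\prod_(j < n) drop_poly m (Defs.trunc1 (alpha j) k) ^+ e j)`_0 =
  \prod_(j < n) alpha j m ^+ e j.
Proof.
move=> m_le_k; rewrite -horner_coef0 horner_prod; apply: eq_bigr => j _.
by rewrite horner_exp horner_coef0 coef_drop_poly add0n coef_poly ltnS m_le_k.
Qed.

Lemma mdeg_mi_of N (b : {ffun 'I_n -> 'I_N.+1}) : mdeg (mi_of b) = (\sum_j b j)%N.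
Proof. by apply: eq_bigr => j _; rewrite ffunE. Qed.

Variables (f : psn R n) (nu : nat).
Hypothesis f_lt : forall b, (mdeg b < nu)%N -> f b = 0.

Lemma pscomp_low k : (k < m * nu)%N -> pscomp f alpha k = 0.
Proof.
move=> k_lt; apply: big1 => b _; rewrite coef_prod_trunc1 -mdeg_mi_of.
have [b_lt|b_ge] := ltnP (mdeg (mi_of b)) nu; first by rewrite f_lt // mul0r.
by rewrite (leq_trans k_lt) ?mulr0 // leq_mul2l b_ge orbT.
Qed.

Lemma pscomp_lead : (0 < m)%N -> (0 < nu)%N ->
  pscomp f alpha (m * nu)%N =
  \sum_(b : {ffun 'I_n -> 'I_nu.+1} | mdeg (mi_of b) == nu)
     f (mi_of b) * mon (mi_of b) (fun j => alpha j m).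
Proof.
move=> m_gt0 nu_gt0.
rewrite -(big_box_mdeg (fun b => f b * mon b (fun j => alpha j m)) (leq_pmull nu m_gt0)).
rewrite big_mkcond /=.
apply: eq_bigr => b _; rewrite coef_prod_trunc1 -mdeg_mi_of.
case: (ltngtP (mdeg (mi_of b)) nu) => [b_lt|b_gt|b_eq]; first by rewrite f_lt // mul0r.
  by rewrite ltn_pmul2l // b_gt mulr0.
rewrite b_eq ltnn subnn coef0_prod_drop ?leq_pmulr //.
by congr (_ * _); apply: eq_bigr => j _; rewrite ffunE.
Qed.

End Composition.


Lemma initX_scale n (X : 'I_n -> psn R n) i (v : 'I_n -> C) c :
  initX X i (fun j => c * v j) = c ^+ nu0 X * initX X i v.
Proof.
rewrite /initX mulr_sumr; apply: eq_bigr => b /eqP b_deg.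
rewrite /mon (eq_bigr (fun j => c ^+ mi_of b j * v j ^+ mi_of b j)) => [|j _].
  by rewrite big_split /= prodrXr [(\sum_j _)%N]b_deg mulrCA.
by rewrite exprMn.
Qed.

Lemma nu0_P_mdeg n (X : 'I_n -> psn R n) i b : X i b != 0 -> nu0_P X (mdeg b).
Proof.
move=> Xb; have [b' b'E] := mi_of_box (mdeg_ge b).
by apply/existsP; exists i; apply/existsP; exists b'; rewrite b'E eqxx Xb.
Qed.

Lemma nu0_vanish n (X : 'I_n -> psn R n) i b : (mdeg b < nu0 X)%N -> X i b = 0.
Proof.
move=> /(@least_or0_min (nu0_P X)) b_lt; apply/eqP; apply: contraNT b_lt.
exact: nu0_P_mdeg.
Qed.

Lemma nu0_gt0 n (X : 'I_n -> psn R n) :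
  (exists i b, X i b != 0) -> (forall i, X i (mi0 n) = 0) -> (0 < nu0 X)%N.
Proof.
move=> [i [b Xb]] X0.
have := @least_or0_ex (nu0_P X) (ex_intro _ (mdeg b) (nu0_P_mdeg Xb)).
move=> /existsP[j /existsP[b' /andP[/eqP b'_deg Xb']]].
rewrite lt0n; apply: contraNneq Xb' => nu0_eq0.
by rewrite (mdeg_eq0 (etrans b'_deg nu0_eq0)) X0.
Qed.

Lemma multV_vanish n (alpha : 'I_n -> ps1 R) i k :
  (k < multV alpha)%N -> alpha i k = 0.
Proof.
move=> /(@least_or0_min (fun k => [exists i, alpha i k != 0])).
by rewrite negb_exists => /forallP/(_ i)/negPn/eqP.
Qed.

Lemma multV_lead n (alpha : 'I_n -> ps1 R) :
  (exists k, [exists i, alpha i k != 0]) -> exists i, alpha i (multV alpha) != 0.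
Proof. by move/(@least_or0_ex (fun k => [exists i, alpha i k != 0]))/existsP. Qed.

Lemma ord1_vanish (g : ps1 R) l : (l < Defs.ord1 g)%N -> g l = 0.
Proof. by move=> /(@least_or0_min (fun k => g k != 0))/negPn/eqP. Qed.

Lemma ord1_lead (g : ps1 R) : (exists k, g k != 0) -> g (Defs.ord1 g) != 0.
Proof. exact: (@least_or0_ex (fun k => g k != 0)). Qed.

Lemma ord1_eq0 (g : ps1 R) : (forall k, g k = 0) -> Defs.ord1 g = 0%N.
Proof.
move=> g0; apply: (@least_or0_eq0 (fun k => g k != 0)) => -[k].
by rewrite g0 eqxx.
Qed.

Lemma lowest_coef_uniq (I : Type) (f : I -> ps1 R) p q i0 :
  (forall i k, (k < p)%N -> f i k = 0) -> (forall i k, (k < q)%N -> f i k = 0) ->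
  f i0 q != 0 -> (exists i, f i p != 0) <-> p = q.
Proof.
move=> f_lt_p f_lt_q fq; split=> [[i fp]|->]; last by exists i0.
apply/eqP; rewrite eqn_leq; apply/andP; split; rewrite leqNgt; apply/negP => lt.
  by move: fq; rewrite f_lt_p ?eqxx.
by move: fp; rewrite f_lt_q ?eqxx.
Qed.

Lemma deriv1_vanish (a : ps1 R) m l :
  (forall k, (k < m)%N -> a k = 0) -> (l < m.-1)%N -> deriv1 a l = 0.
Proof. by move=> a_lt l_lt; rewrite /deriv1 a_lt ?mul0rn //; lia. Qed.

Lemma mul1_deriv_low (g a : ps1 R) m k :
  (forall j, (j < m)%N -> a j = 0) -> (k < Defs.ord1 g + m.-1)%N ->
  mul1 g (deriv1 a) k = 0.
Proof.
move=> a_lt; apply: mul1_low => [j|j]; first exact: ord1_vanish.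
exact: deriv1_vanish.
Qed.

Lemma mul1_deriv_lead (g a : ps1 R) m :
  (0 < m)%N -> (forall j, (j < m)%N -> a j = 0) -> (exists k, g k != 0) ->
  a m != 0 -> mul1 g (deriv1 a) (Defs.ord1 g + m.-1)%N != 0.
Proof.
move=> m_gt0 a_lt g_nz am; rewrite mul1_lead => [||j]; last 2 first.
- exact: ord1_vanish.
- exact: deriv1_vanish.
by rewrite /deriv1 prednK // mulf_neq0 ?ord1_lead // mulrn_eq0 negb_or -lt0n m_gt0.
Qed.

End FormalSeries.

Section Convergence.
Variable R : realType.
Local Notation C := R[i].
Local Open Scope complex_scope.

(* mathcomp-analysis equips numFieldType instances with their topology; [R[i]]
   acquires it only when seen through such an instance. *)
Let Cn : numClosedFieldType := R[i].

Lemma cvg_toP (u : nat -> C) L :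
  Defs.cvg_to u L <-> (u : nat -> Cn) @ \oo --> (L : Cn).
Proof.
rewrite cvgrPdistC_lt; split=> h e /h.
  by move=> [N hN]; exists N => // k; apply: hN.
by move=> [N _ hN]; exists N => k; apply: hN.
Qed.

Lemma normC_real (x : R) : `|x%:C| = `|x|%:C :> C.
Proof. by rewrite normc_def /= expr0n addr0 sqrtr_sqr. Qed.

Lemma normC_le_ReIm (z : C) : `|z| <= `|complex.Re z|%:C + `|complex.Im z|%:C.
Proof.
rewrite {1}[z]complexE; apply: le_trans (ler_normD _ _) _.
by rewrite normrM normC_real normC_real normc_def /= expr0n expr1n add0r sqrtr1 mul1r.
Qed.

Lemma gt0_complex (e : C) : 0 < e -> e = (complex.Re e)%:C /\ 0 < complex.Re e.
Proof. by case: e => a b; rewrite ltcE /= => /andP[/eqP -> ->]. Qed.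

Lemma cvg_ReIm (u : nat -> C) a b :
  (fun k => complex.Re (u k)) @ \oo --> a -> (fun k => complex.Im (u k)) @ \oo --> b ->
  Defs.cvg_to u (a +i* b).
Proof.
move=> /cvgrPdistC_lt hRe /cvgrPdistC_lt hIm e /gt0_complex[-> e0].
have e2 : 0 < complex.Re e / 2 by lra.
have [N1 _ h1] := hRe _ e2; have [N2 _ h2] := hIm _ e2.
exists (maxn N1 N2) => k; rewrite geq_max => /andP[k1 k2].
apply: le_lt_trans (normC_le_ReIm _) _.
rewrite -rmorphD ltcR /=.
have := h1 k k1; have := h2 k k2; case: (u k) => x y /=.
lra.
Qed.

Lemma cvg_abs_bounded_series (c : nat -> R) (M : R) :
  (forall N, \sum_(k < N) `|c k| <= M) ->
  exists l : R, (fun N => \sum_(k < N) c k) @ \oo --> l.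
Proof.
move=> hM; have /cvg_ex[/= l hl] : cvgn (series c).
  apply: normed_cvg; apply: nondecreasing_is_cvgn.
    by apply/nondecreasing_seqP => N; rewrite /= seriesSr lerDl.
  by exists M => _ [N _ <-]; rewrite /= seriesEord /=; apply: hM.
by exists l; rewrite seriesEord in hl.
Qed.

Lemma lec_Re (s : R) (M : C) : s%:C <= M -> s <= complex.Re M.
Proof. by rewrite lecE => /andP[]. Qed.

Lemma normc_ge_Im (z : C) : `|complex.Im z|%:C <= `|z|.
Proof.
have normi : `|'i| = 1 :> C by rewrite normc_def /= expr0n expr1n add0r sqrtr1.
by rewrite -normrN -ReiNIm -[`|z|]mulr1 -normi -normrM normc_ge_Re.
Qed.

Lemma sum1_exists (a : ps1 R) (t M : C) :
  (forall N, \sum_(k < N) `|a k * t ^+ k| <= M) -> exists x, sum1 a t x.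
Proof.
move=> hM; pose c k := a k * t ^+ k.
have part_cvg (d : nat -> R) : (forall k, `|d k|%:C <= `|c k|) ->
    exists l : R, (fun N => \sum_(k < N) d k) @ \oo --> l.
  move=> hd; apply: (@cvg_abs_bounded_series _ (complex.Re M)) => N.
  apply: lec_Re; rewrite rmorph_sum; apply: le_trans (hM N).
  by apply: ler_sum => k _; apply: hd.
have [l1 h1] := part_cvg (fun k => complex.Re (c k)) (fun k => normc_ge_Re (c k)).
have [l2 h2] : exists l : R, (fun N => \sum_(k < N) complex.Im (c k)) @ \oo --> l.
  exact: (part_cvg (fun k => complex.Im (c k))) (fun k => normc_ge_Im (c k)).
by exists (l1 +i* l2); apply: cvg_ReIm; under eq_fun do rewrite raddf_sum.
Qed.

Lemma cvg_dist_le (u : nat -> C) x y E K : Defs.cvg_to u x ->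
  (forall N, (K <= N)%N -> `|u N - y| <= E) -> `|x - y| <= E.
Proof.
move=> hu hE; apply/ler_addgt0Pr => e /hu[N hN].
have hk := leq_maxl N K; have hk' := leq_maxr N K.
rewrite -(subrK (u (maxn N K)) x) -addrA addrC.
apply: le_trans (ler_normD _ _) _; apply: lerD; first exact: hE.
by rewrite -normrN opprB ltW // hN.
Qed.

Lemma sum1_lead_estimate (a : ps1 R) m :
  conv1 a -> (forall k, (k < m)%N -> a k = 0) ->
  exists2 r : C, 0 < r & exists2 B : C, 0 <= B & forall t, `|t| < r ->
    (exists x, sum1 a t x) /\
    forall x, sum1 a t x -> `|x - a m * t ^+ m| <= B * `|t| ^+ m.+1.
Proof.
move=> [r [r0 [M hM]]] a_lt_m; exists r => //.
have M_ge0 : 0 <= M by apply: le_trans (hM 0%N); rewrite big_ord1 mulr_ge0.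
exists (M / r ^+ m.+1) => [|t ht]; first by rewrite divr_ge0 // exprn_ge0 // ltW.
set s := `|t| / r.
have s_ge0 : 0 <= s by rewrite divr_ge0 // ltW.
have s_le1 : s <= 1 by rewrite ler_pdivrMr // mul1r ltW.
have tE : `|t| = s * r by rewrite divfK ?gt_eqF.
have bound N : \sum_(k < N) `|a k| * r ^+ k <= M.
  apply: le_trans (hM N); rewrite big_ord_recr /= lerDl.
  by rewrite mulr_ge0 // exprn_ge0 // ltW.
split.
  apply: (@sum1_exists _ _ M) => N; apply: le_trans _ (bound N).
  apply: ler_sum => k _; rewrite normrM normrX ler_wpM2l //.
  by apply: lerXn2r; rewrite ?nnegrE // ltW.
move=> x hx; apply: (cvg_dist_le (K := m.+1) hx) => N hN.
rewrite (bigD1 (Ordinal hN)) //= addrAC subrr add0r.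
apply: le_trans (ler_norm_sum _ _ _) _.
apply: (@le_trans _ _ (\sum_(k < N) `|a k| * r ^+ k * s ^+ m.+1)); last first.
  have -> : M / r ^+ m.+1 * `|t| ^+ m.+1 = M * s ^+ m.+1.
    by rewrite /s expr_div_n; ring.
  by rewrite -mulr_suml ler_wpM2r ?exprn_ge0.
rewrite [X in _ <= X](bigD1 (Ordinal hN)) //= ler_wpDl //.
  by rewrite !mulr_ge0 // exprn_ge0 // ltW.
apply: ler_sum => k /= hk; have [k_lt_m|m_le_k] := ltnP k m.
  by rewrite a_lt_m // mul0r normr0 !mul0r.
have m_lt_k : (m < k)%N.
  rewrite ltn_neqAle m_le_k andbT.
  by apply: contraNneq hk => mk; apply/eqP/val_inj; rewrite /= mk.
rewrite normrM normrX tE exprMn -mulrA; apply: ler_wpM2l => //.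
rewrite mulrC; apply: ler_wpM2l; first by rewrite exprn_ge0 // ltW.
exact: ler_wiXn2l.
Qed.

(* The q with x = t^m q; at t = 0 it is set to the expected limit v. *)
Definition deflate (m : nat) (v t x : C) : C := if t == 0 then v else x / t ^+ m.

Section Deflate.
Variables (m : nat) (v t x B : C).
Hypothesis x_near : `|x - v * t ^+ m| <= B * `|t| ^+ m.+1.

Lemma deflateK : x = t ^+ m * deflate m v t x.
Proof.
rewrite /deflate; case: eqP => [t0 | /eqP t0]; last by rewrite mulrC divfK // expf_neq0.
apply/eqP; rewrite mulrC -subr_eq0 -normr_le0; move: x_near.
by rewrite t0 normr0 !expr0n /= mulr0.
Qed.

Lemma deflate_dist : `|deflate m v t x - v| <= B * `|t|.
Proof.
rewrite /deflate; case: eqP => [-> | /eqP t0]; first by rewrite subrr normr0 mulr0.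
have tm0 : 0 < `|t| ^+ m by rewrite exprn_gt0 // normr_gt0.
rewrite -[v](mulfK (expf_neq0 m t0)) -mulrBl normrM normfV normrX ler_pdivrMr //.
by rewrite -mulrA -exprS.
Qed.

End Deflate.

Lemma deflate_cvg (a : ps1 R) m (t x : nat -> C) :
  conv1 a -> (forall k, (k < m)%N -> a k = 0) -> Defs.cvg_to t 0 ->
  (forall k, sum1 a (t k) (x k)) ->
  (exists K, forall k, (K <= k)%N -> x k = t k ^+ m * deflate m (a m) (t k) (x k)) /\
  Defs.cvg_to (fun k => deflate m (a m) (t k) (x k)) (a m).
Proof.
move=> ha a_lt_m t0 hx; have [r r0 [B B0 hB]] := sum1_lead_estimate ha a_lt_m.
have [K hK] := t0 r r0; split.
  by exists K => k /hK; rewrite subr0 => /hB[_ /(_ _ (hx k))] /deflateK.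
move=> e e0; have B1 : 0 < B + 1 by rewrite ltr_pwDr.
have [K' hK'] := t0 (e / (B + 1)) (divr_gt0 e0 B1).
exists (maxn K K') => k; rewrite geq_max => /andP[kK kK'].
have := hK k kK; have := hK' k kK'; rewrite !subr0 ltr_pdivlMr // => tk_e tk_r.
have [_ /(_ _ (hx k)) est] := hB _ tk_r.
apply: le_lt_trans (deflate_dist est) (le_lt_trans _ tk_e).
by rewrite mulrC ler_wpM2l // lerDl.
Qed.

Lemma tcone_collinear n (alpha : 'I_n -> ps1 R) m w :
  (forall i, conv1 (alpha i)) -> (forall i k, (k < m)%N -> alpha i k = 0) ->
  tcone alpha w -> forall i j, w i * alpha j m = w j * alpha i m.
Proof.
move=> hc a_lt_m [t [lam [x [t0 [hx hw]]]]] i j.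
pose q l k := deflate m (alpha l m) (t k) (x k l).
have [[Ki xiE] /cvg_toP qi] := deflate_cvg (hc i) (a_lt_m i) t0 (hx^~ i).
have [[Kj xjE] /cvg_toP qj] := deflate_cvg (hc j) (a_lt_m j) t0 (hx^~ j).
have /cvg_toP wi := hw i; have /cvg_toP wj := hw j.
(* Both sides equal lam t^m q_i q_j eventually, and tend to w_j v_i and w_i v_j. *)
have E : {near \oo, (fun k => lam k * x k j * q i k) =1
                    (fun k => lam k * x k i * q j k)}.
  near=> k.
  have kKi : (Ki <= k)%N by near: k; exact: nbhs_infty_ge.
  have kKj : (Kj <= k)%N by near: k; exact: nbhs_infty_ge.
  move: (xiE k kKi) (xjE k kKj); rewrite -/(q i k) -/(q j k).
  by move: (q i k) (q j k) => Qi Qj -> ->; ring.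
have lim_i : (fun k => lam k * x k i * q j k) @ \oo --> (w i * alpha j m : Cn).
  exact: (cvgM wi qj).
have lim_j : (fun k => lam k * x k i * q j k) @ \oo --> (w j * alpha i m : Cn).
  exact: cvg_trans (near_eq_cvg E) (cvgM wj qi).
exact: (norm_cvg_unique (F := (fun k => lam k * x k i * q j k : Cn) @ \oo) lim_i lim_j).
Unshelve. all: by end_near.
Qed.

Lemma finite_pos_lbound (I : finType) (d : I -> R) :
  (forall i, 0 < d i) -> exists2 e : R, 0 < e & forall i, e < d i.
Proof.
move=> d0; have S0 : 0 < 1 + \sum_i (d i)^-1.
  by rewrite ltr_pwDl // sumr_ge0 // => i _; rewrite invr_ge0 ltW.
exists (1 + \sum_i (d i)^-1)^-1 => [|i]; first by rewrite invr_gt0.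
rewrite -[d i]invrK ltf_pV2 ?posrE ?invr_gt0 // (bigD1 i) //= addrCA ltrDl.
by rewrite ltr_pwDl // sumr_ge0 // => j _; rewrite invr_ge0 ltW.
Qed.

Lemma tcone_lead n (alpha : 'I_n -> ps1 R) m :
  (forall i, conv1 (alpha i)) -> (forall i k, (k < m)%N -> alpha i k = 0) ->
  tcone alpha (fun i => alpha i m).
Proof.
move=> hc a_lt_m.
have /boolp.choice[r hr] : forall i, exists r : C,
    0 < r /\ forall t, `|t| < r -> exists x, sum1 (alpha i) t x.
  move=> i; have [r r0 [B _ hB]] := sum1_lead_estimate (hc i) (a_lt_m i).
  by exists r; split => // t /hB[].
have [e e0 e_lt] := finite_pos_lbound (fun i => (gt0_complex (hr i).1).2).
pose t k := (e / k.+1%:R)%:C.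
have t_neq0 k : t k != 0.
  apply/eqP => /(congr1 (@complex.Re R)) /= /eqP.
  by rewrite mulf_eq0 invr_eq0 pnatr_eq0 gt_eqF.
have t_lt k i : `|t k| < r i.
  have [-> _] := gt0_complex (hr i).1.
  rewrite normC_real ltcR ger0_norm ?divr_ge0 ?(ltW e0) //.
  apply: le_lt_trans (e_lt i); rewrite ler_pdivrMr // ler_peMr ?ler1n ?(ltW e0) //.
have t_cvg : Defs.cvg_to t 0.
  apply: cvg_ReIm => /=; last exact: cvg_cst.
  by rewrite -(mulr0 e); apply: cvgM; [exact: cvg_cst | exact: cvg_harmonic].
have [x hx] := boolp.choice (fun p : nat * 'I_n => (hr p.2).2 _ (t_lt p.1 p.2)).
exists t, (fun k => (t k ^+ m)^-1), (fun k i => x (k, i)); split=> //; split=> [k i|i].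
  exact: hx (k, i).
have [_ qi] := deflate_cvg (hc i) (a_lt_m i) t_cvg (fun k => hx (k, i)).
suff -> : (fun k => (t k ^+ m)^-1 * x (k, i)) =
          (fun k => deflate m (alpha i m) (t k) (x (k, i))).
  exact: qi.
by apply: funext => k; rewrite /deflate (negbTE (t_neq0 k)) mulrC.
Qed.

Lemma tcone_initX n (X : 'I_n -> psn R n) (alpha : 'I_n -> ps1 R) m i0 :
  (forall i, conv1 (alpha i)) -> (forall i k, (k < m)%N -> alpha i k = 0) ->
  alpha i0 m != 0 ->
  (exists w, tcone alpha w /\ exists i, initX X i w != 0) <->
  exists i, initX X i (fun j => alpha j m) != 0.
Proof.
move=> hc alpha_lt v_i0; split=> [[w [w_cone [i Xw]]]|[i Xv]]; last first.
  by exists (fun j => alpha j m); split; [exact: tcone_lead | exists i].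
exists i; apply: contra_neq Xw => Xv0.
have -> : w = (fun j => w i0 / alpha i0 m * alpha j m).
  apply: funext => j.
  by rewrite mulrAC -(tcone_collinear hc alpha_lt w_cone j i0) mulfK.
by rewrite initX_scale Xv0 mulr0.
Qed.

Lemma cvg_to_eq0 (u : nat -> C) : (forall N, u N = 0) -> Defs.cvg_to u 0.
Proof. by move=> u0 e e0; exists 0%N => k _; rewrite u0 subrr normr0. Qed.

Lemma half_lt (r : C) : 0 < r -> `|r / 2| < r.
Proof.
move=> r0; rewrite ger0_norm ?divr_ge0 ?ltW // ltr_pdivrMr //.
by rewrite mulr_natr mulr2n ltrDl.
Qed.

Lemma isolated_sing_nonzero n (X : 'I_n -> psn R n) (i0 : 'I_n) :
  isolated_sing X -> exists i b, X i b != 0.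
Proof.
move=> [_ [rho [rho0 iso]]]; apply: contrapT => X_nz.
have X0 i b : X i b = 0.
  by apply/eqP; apply: contrapT => Xb; apply: X_nz; exists i, b; apply/negP.
have := iso (fun _ => rho / 2) (fun _ => half_lt rho0).
have /[swap]/[apply]/(_ i0)/eqP : forall i, Defs.sumn (X i) (fun _ => rho / 2) 0.
  by move=> i; apply: cvg_to_eq0 => N; rewrite big1 // => b _; rewrite X0 mul0r.
by rewrite mulf_eq0 invr_eq0 pnatr_eq0 orbF gt_eqF.
Qed.

Lemma puiseux_nonzero n (alpha : 'I_n -> ps1 R) :
  puiseux alpha -> exists k, [exists i, alpha i k != 0].
Proof.
move=> [_ [_ [eps [eps0 inj]]]]; apply: contrapT => alpha_nz.
have alpha0 i k : alpha i k = 0.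
  apply/eqP; apply: contrapT => aik; apply: alpha_nz; exists k.
  by apply/existsP; exists i; apply/negP.
have sum0 t i : sum1 (alpha i) t 0.
  by apply: cvg_to_eq0 => N; rewrite big1 // => k _; rewrite alpha0 mul0r.
have norm0 : `|0 : C| < eps by rewrite normr0.
have /eqP := inj 0 (eps / 2) (fun _ => 0) (fun _ => 0) norm0 (half_lt eps0)
  (sum0 0) (sum0 _) (fun _ => erefl).
by rewrite eq_sym mulf_eq0 invr_eq0 pnatr_eq0 orbF gt_eqF.
Qed.

End Convergence.

Lemma rV_eqE (nu d m : nat) : (0 < m)%N ->
  ((nu%:R : rat) = 1 + (d%:R - 1) / m%:R) <-> (m * nu = d + m.-1)%N.
Proof.
move=> m_gt0; have m0 : (m%:R : rat) != 0 by rewrite pnatr_eq0 -lt0n.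
have m1 : (m.-1%:R : rat) = m%:R - 1 by rewrite -{2}(prednK m_gt0) -natr1 addrK.
split=> [nuE|/(congr1 (fun k => k%:R : rat))].
  by apply/eqP; rewrite -(eqr_nat rat) natrM natrD m1 nuE; apply/eqP; field.
by rewrite natrM natrD m1 => E; apply: (mulfI m0); rewrite E; field.
Qed.

Theorem mainTheorem7 (R : realType) (n : nat) (X : 'I_n -> psn R n)
  (alpha : 'I_n -> ps1 R) (g : ps1 R) :
  holo_vf X -> isolated_sing X ->
  puiseux alpha -> vf_invariant X alpha ->
  index_fun X alpha g ->
  ((exists w : 'I_n -> R[i], tcone alpha w /\ exists i, initX X i w != 0)
   <-> ((nu0 X)%:R = 1 + rV alpha g :> rat)).
Proof.
move=> _ X_iso alpha_pui _ [_ Xalpha].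
have alpha_nz := puiseux_nonzero alpha_pui; case: alpha_pui => alpha_conv [alpha0 _].
have [i0 v_i0] := multV_lead alpha_nz; set m := multV alpha in v_i0.
have alpha_lt i k : (k < m)%N -> alpha i k = 0 := @multV_vanish _ _ _ _ _.
have m_gt0 : (0 < m)%N by rewrite lt0n; apply: contraNneq v_i0 => ->; rewrite alpha0.
set nu := nu0 X.
have nu_gt0 : (0 < nu)%N := nu0_gt0 (isolated_sing_nonzero i0 X_iso) X_iso.1.
have X_lt i b : (mdeg b < nu)%N -> X i b = 0 := @nu0_vanish _ _ _ _ _.
have lead i : initX X i (fun j => alpha j m) = pscomp (X i) alpha (m * nu)%N.
  by rewrite (pscomp_lead alpha_lt (X_lt i)).
apply: iff_trans (tcone_initX X alpha_conv alpha_lt v_i0) _.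
apply: (@iff_trans _ (exists i, pscomp (X i) alpha (m * nu)%N != 0)).
  by split=> -[i Xi]; exists i; rewrite ?lead in Xi *.
apply: iff_trans _ (iff_sym (rV_eqE _ _ m_gt0)).
have [g_nz|g_zero] := pselect (exists k, g k != 0).
  apply: (lowest_coef_uniq (f := fun i => pscomp (X i) alpha) (i0 := i0)) => [i k|i k|].
  - exact: (pscomp_low alpha_lt (X_lt i)).
  - by rewrite Xalpha; apply: mul1_deriv_low (alpha_lt i).
  by rewrite /= Xalpha; apply: mul1_deriv_lead (alpha_lt i0) g_nz v_i0.
have g0 k : g k = 0.
  by apply/eqP; apply: contrapT => gk; apply: g_zero; exists k; apply/negP.
rewrite ord1_eq0 //; split=> [[l]|]; last by rewrite add0n; nia.
by rewrite Xalpha /mul1 big1 ?eqxx // => j _; rewrite g0 mul0r.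
Qed.
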